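(* Let $m\ge 2$ and let $K_1,K_2$ be Latin squares on $[m]$. If $K_1$ and $K_2$ are main class isotopic, then the matroids $M[K_1]$ and $M[K_2]$ are isomorphic. If $K_1$ is not main class isotopic to $K_2$, then $M[K_1]$ is not isomorphic to $M[K_2]$.
   Context: A Latin square of order $m$ on $[m]$ is an $m\times m$ matrix $K=(k_{i,j})$ with entries in $[m]$ such that each symbol occurs exactly once in each row and each column. More generally, given $m$-sets $E_1,E_2,E_3$, a Latin square with rows indexed by $E_1$, columns by $E_2$ and symbols in $E_3$ has $T(K)=\{\{x_1,x_2,x_3\}: x_i\in E_i,\ k_{x_1,x_2}=x_3\}$. Two Latin squares are isotopic if one is obtained from the other by permuting rows, permuting columns, and applying a bijection of the symbol set. For a permutation $\sigma$ of $\{1,2,3\}$, the $\sigma$-conjugate $K_\sigma$ is the Latin square with rows indexed by $E_{\sigma 1}$, columns by $E_{\sigma2}$, symbols in $E_{\sigma 3}$, defined by $T(K_\sigma)=T(K)$. Two Latin squares are main class isotopic if one is isotopic to some conjugate of the other. For a Latin square $K=(k_{i,j})$ on $[m]$, let $\mathcal{C}[K]=\{\{i, m+j, 2m+k_{i,j}\}: 1\le i,j\le m\}$, a family of $3$-subsets of $[3m]$. For $m\ge 2$, $M[K]$ denotes the unique simple matroid on $[3m]$ of rank $3$ whose family of all $3$-element circuits equals $\mathcal{C}[K]$. *)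

From mathcomp Require Import all_boot all_order all_fingroup.
Set Implicit Arguments. Unset Strict Implicit. Unset Printing Implicit Defensive.

(* [m] is represented by 'I_m (0-based), [3m] by 'I_(3*m). *)

Definition latin_square (m : nat) (K : 'I_m -> 'I_m -> 'I_m) : Prop :=
  (forall (i s : 'I_m), #|[set j | K i j == s]| = 1) /\
  (forall (j s : 'I_m), #|[set i | K i j == s]| = 1).

(* T(K), with a triple written as an ordered function t : 'I_3 -> 'I_m,
   t 0 in E_1 (rows), t 1 in E_2 (columns), t 2 in E_3 (symbols). *)
Definition inT (m : nat) (K : 'I_m -> 'I_m -> 'I_m) (t : 'I_3 -> 'I_m) : bool :=
  K (t (@Ordinal 3 0 isT)) (t (@Ordinal 3 1 isT)) == t (@Ordinal 3 2 isT).

(* L is the sigma-conjugate K_sigma of K: rows of L come from E_(sigma 1),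
   columns from E_(sigma 2), symbols from E_(sigma 3), and T(L) = T(K);
   i.e. (u0,u1,u2) in T(L) iff the triple t with t_(sigma j) = u_j is in T(K). *)
Definition is_conjugate (m : nat) (s : {perm 'I_3})
  (K L : 'I_m -> 'I_m -> 'I_m) : Prop :=
  forall u : 'I_3 -> 'I_m, inT L u = inT K (fun i => u (s^-1 i)%g).

Definition isotopic (m : nat) (A B : 'I_m -> 'I_m -> 'I_m) : Prop :=
  exists (a b c : {perm 'I_m}), forall i j, B (a i) (b j) = c (A i j).

Definition main_class_isotopic (m : nat) (K1 K2 : 'I_m -> 'I_m -> 'I_m) : Prop :=
  exists (s : {perm 'I_3}) (L : 'I_m -> 'I_m -> 'I_m),
    is_conjugate s K1 L /\ isotopic L K2.

Definition is_matroid (T : finType) (I : {set T} -> bool) : Prop :=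
  [/\ I set0,
      (forall A B : {set T}, B \subset A -> I A -> I B) &
      (forall A B : {set T}, I A -> I B -> #|A| < #|B| ->
          exists2 x, x \in B :\: A & I (x |: A))].

Definition circuit (T : finType) (I : {set T} -> bool) (C : {set T}) : Prop :=
  ~~ I C /\ (forall D : {set T}, D \proper C -> I D).

(* simple: no loops and no parallel elements, i.e. no circuits of size <= 2 *)
Definition simple_matroid (T : finType) (I : {set T} -> bool) : Prop :=
  forall C, circuit I C -> 2 < #|C|.

Definition matroid_rank_is (T : finType) (I : {set T} -> bool) (r : nat) : Prop :=
  (exists X, I X /\ #|X| = r) /\ (forall X, I X -> #|X| <= r).

Definition CK (m : nat) (K : 'I_m -> 'I_m -> 'I_m) : {set {set 'I_(3 * m)}} :=
  [set X : {set 'I_(3 * m)} | [exists i : 'I_m, exists j : 'I_m,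
     X == [set y : 'I_(3 * m) |
             val y \in [:: val i; m + val j; 2 * m + val (K i j)]]]].

Definition is_MK (m : nat) (K : 'I_m -> 'I_m -> 'I_m)
  (I : {set 'I_(3 * m)} -> bool) : Prop :=
  [/\ is_matroid I, simple_matroid I, matroid_rank_is I 3 &
      forall C : {set 'I_(3 * m)}, (circuit I C /\ #|C| = 3) <-> C \in CK K].

Definition matroid_iso (T : finType) (I1 I2 : {set T} -> bool) : Prop :=
  exists f : {perm T}, forall X : {set T}, I2 (f @: X) = I1 X.

From mathcomp Require Import all_boot all_order all_fingroup.
Set Implicit Arguments. Unset Strict Implicit. Unset Printing Implicit Defensive.

(* In a simple matroid of rank 3 a set is independent iff it has at most two
   elements, or three elements not forming a circuit; so M[K1] and M[K2] are
   isomorphic iff some permutation of [3m] maps C[K1] onto C[K2].  Every row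
   and column of a Latin square meets every symbol, hence two distinct points
   of [3m] lie on a common member of C[K] iff they lie in different blocks
   E_1, E_2, E_3.  A permutation carrying C[K1] onto C[K2] therefore permutes
   the blocks and relabels each block, i.e. it is a paratopy (a conjugation
   followed by an isotopy), which is exactly a main class isotopy. *)

Definition set_system_iso (T : finType) (F1 F2 : {set {set T}}) : Prop :=
  exists f : {perm T}, forall X : {set T}, (f @: X \in F2) = (X \in F1).

Section Triangles.
Variable T : finType.

Lemma dependent_sub_circuit (I : {set T} -> bool) (X : {set T}) :
  ~~ I X -> exists2 C : {set T}, C \subset X & circuit I C.
Proof.
move=> depX; have [C minC subCX] := minset_exists (P := [pred Y | ~~ I Y]) depX.
exists C => //; split; first exact: minsetp minC.
move=> D properDC; apply/negPn/negP => depD.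
by move: (properDC); rewrite (minsetinf minC depD (proper_sub properDC)) properxx.
Qed.

Definition rank3_with_triangles (F : {set {set T}}) (I : {set T} -> bool) : Prop :=
  [/\ simple_matroid I, matroid_rank_is I 3 &
      forall C : {set T}, circuit I C /\ #|C| = 3 <-> C \in F].

Lemma triangle_card F I C : rank3_with_triangles F I -> C \in F -> #|C| = 3.
Proof. by case=> _ _ triF /triF []. Qed.

Lemma rank3_indepE F I X : rank3_with_triangles F I ->
  I X = (#|X| <= 2) || (#|X| == 3) && (X \notin F).
Proof.
case=> simpleI [_ rankI] triF.
have small_indep (Y : {set T}) : #|Y| <= 2 -> I Y.
  move=> smallY; apply/negPn/negP => /dependent_sub_circuit [C subCY /simpleI].
  by rewrite ltnNge (leq_trans (subset_leq_card subCY)).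
have [smallX|bigX] := leqP #|X| 2; first exact: small_indep.
have [cardX|cardX] := eqVneq #|X| 3; last first.
  apply/negP => /rankI; rewrite leq_eqVlt (negbTE cardX) /=.
  by rewrite ltnS leqNgt bigX.
rewrite /=; apply/idP/idP => [indepX|FnX].
  by apply: contraL indepX => /triF [[]].
apply/negPn/negP => depX; move/negP: FnX; apply; apply/triF.
by split=> //; split=> // D /proper_card; rewrite cardX => /small_indep.
Qed.

Lemma matroid_iso_triangles F1 F2 I1 I2 :
  rank3_with_triangles F1 I1 -> rank3_with_triangles F2 I2 ->
  matroid_iso I1 I2 <-> set_system_iso F1 F2.
Proof.
move=> M1 M2; split=> -[f isof]; exists f => X; last first.
  by rewrite (rank3_indepE _ M1) (rank3_indepE _ M2) (card_imset _ perm_inj) isof.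
have := isof X.
rewrite (rank3_indepE _ M1) (rank3_indepE _ M2) (card_imset _ perm_inj).
have [cardX|cardX] := eqVneq #|X| 3; first by rewrite cardX /= => /negb_inj.
move=> _; apply/idP/idP => [/(triangle_card M2)|/(triangle_card M1)].
  by rewrite (card_imset _ perm_inj) => /eqP; rewrite (negbTE cardX).
by move/eqP; rewrite (negbTE cardX).
Qed.
End Triangles.

Definition collinear (T : finType) (F : {set {set T}}) (x y : T) : bool :=
  [exists X in F, (x \in X) && (y \in X)].

Lemma perm_imsetK (T : finType) (f : {perm T}) (X : {set T}) :
  f @: ((f^-1)%g @: X) = X.
Proof. by rewrite -imset_comp (eq_imset _ (permKV f)) imset_id. Qed.

Lemma collinear_iso (T : finType) (F1 F2 : {set {set T}}) (f : {perm T}) :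
  (forall X : {set T}, (f @: X \in F2) = (X \in F1)) ->
  forall x y, collinear F2 (f x) (f y) = collinear F1 x y.
Proof.
move=> isof x y; apply/existsP/existsP => -[X /and3P [FX Xx Xy]].
  exists ((f^-1)%g @: X); rewrite -isof perm_imsetK FX.
  by rewrite -[x](permK f) -[y](permK f) !imset_f.
by exists (f @: X); rewrite isof FX !imset_f.
Qed.

(* Spelled as in [inT], so that [inT K (triple a b c)] computes. *)
Notation o0 := (@Ordinal 3 0 isT).
Notation o1 := (@Ordinal 3 1 isT).
Notation o2 := (@Ordinal 3 2 isT).

Lemma ord3P (p : 'I_3) : [\/ p = o0, p = o1 | p = o2].
Proof.
case: p => -[|[|[|//]]] ? ; [constructor 1 | constructor 2 | constructor 3];
  exact: val_inj.
Qed.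

Definition triple (T : Type) (a b c : T) (p : 'I_3) : T :=
  if val p == 0 then a else if val p == 1 then b else c.

Section Encoding.
Variable m : nat.
Hypothesis m_gt0 : 0 < m.

(* The point [y] of [3m] is [enc (blk y) (pos y)] = blk y * m + pos y: block
   [blk y] plays the role of E_1, E_2 or E_3, and [pos y] is its index there. *)

Lemma enc_subproof (p : 'I_3) (k : 'I_m) : p * m + k < 3 * m.
Proof.
by rewrite -ltn_subRL -mulnBl (leq_trans (ltn_ord k)) // leq_pmull // subn_gt0.
Qed.
Definition enc p k : 'I_(3 * m) := Ordinal (enc_subproof p k).

Lemma blk_subproof (y : 'I_(3 * m)) : y %/ m < 3.
Proof. by rewrite ltn_divLR // mulnC. Qed.
Definition blk y : 'I_3 := Ordinal (blk_subproof y).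
Definition pos (y : 'I_(3 * m)) : 'I_m := Ordinal (ltn_pmod y m_gt0).

Lemma blk_enc p k : blk (enc p k) = p.
Proof. by apply: val_inj; rewrite /= divnMDl // divn_small // addn0. Qed.

Lemma pos_enc p k : pos (enc p k) = k.
Proof. by apply: val_inj; rewrite /= modnMDl modn_small. Qed.

Lemma enc_blk_pos y : enc (blk y) (pos y) = y.
Proof. by apply: val_inj; rewrite /= -divn_eq. Qed.

Lemma enc_inj p k p' k' : enc p k = enc p' k' -> p = p' /\ k = k'.
Proof.
by move=> E; split; [rewrite -(blk_enc p k) E | rewrite -(pos_enc p k) E];
  rewrite ?blk_enc ?pos_enc.
Qed.

Definition tri (t : 'I_3 -> 'I_m) : {set 'I_(3 * m)} := [set enc p (t p) | p : 'I_3].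

Lemma enc_in_tri t p : enc p (t p) \in tri t.
Proof. exact: imset_f. Qed.

Lemma tri_inj t u : tri t = tri u -> t =1 u.
Proof.
move=> E p; have := enc_in_tri t p; rewrite E.
by case/imsetP=> p' _ /enc_inj [-> ->].
Qed.

Lemma tri_ext t u : t =1 u -> tri t = tri u.
Proof. by move=> E; apply: eq_imset => p; rewrite E. Qed.

Lemma inT_ext (K : 'I_m -> 'I_m -> 'I_m) t u : t =1 u -> inT K t = inT K u.
Proof. by move=> E; rewrite /inT !E. Qed.

Lemma tri_val t : tri t =
  [set y : 'I_(3 * m) |
     val y \in [:: val (t o0); m + val (t o1); 2 * m + val (t o2)]].
Proof.
apply/setP => y; rewrite inE; apply/imsetP/idP => [[p _ ->]|].
  by case: (ord3P p) => ->; rewrite !inE /= ?mul0n ?mul1n eqxx ?orbT.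
rewrite !inE => /or3P[] /eqP E; [exists o0 | exists o1 | exists o2] => //;
  by apply: val_inj; rewrite /= E ?mul0n ?mul1n.
Qed.

Lemma CKP (K : 'I_m -> 'I_m -> 'I_m) X :
  reflect (exists2 t, inT K t & X = tri t) (X \in CK K).
Proof.
rewrite inE; apply: (iffP existsP) => [[i /existsP [j /eqP ->]]|[t /eqP Kt ->]].
  by exists (triple i j (K i j)); rewrite /inT ?tri_val.
by exists (t o0); apply/existsP; exists (t o1); rewrite tri_val Kt.
Qed.

Lemma tri_in_CK (K : 'I_m -> 'I_m -> 'I_m) t : (tri t \in CK K) = inT K t.
Proof.
apply/CKP/idP => [[u Ku /tri_inj tu]|Kt]; last by exists t.
by rewrite (inT_ext K tu).
Qed.

Section LatinSquare.
Variable K : 'I_m -> 'I_m -> 'I_m.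
Hypothesis latinK : latin_square K.

Lemma latin_row_surj i s : exists j, K i j = s.
Proof.
have /eqP/cards1P [j Ej] := latinK.1 i s.
by exists j; have := set11 j; rewrite -Ej inE => /eqP.
Qed.

Lemma latin_col_surj j s : exists i, K i j = s.
Proof.
have /eqP/cards1P [i Ei] := latinK.2 j s.
by exists i; have := set11 i; rewrite -Ei inE => /eqP.
Qed.

Lemma latin_inT_extend p p' a b :
  p != p' -> exists t, [/\ inT K t, t p = a & t p' = b].
Proof.
case: (ord3P p) => ->; case: (ord3P p') => -> // _.
- by exists (triple a b (K a b)); split; rewrite /inT /=.
- have [j <-] := latin_row_surj a b.
  by exists (triple a j (K a j)); split; rewrite /inT /=.
- by exists (triple b a (K b a)); split; rewrite /inT /=.
- have [i <-] := latin_col_surj a b.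
  by exists (triple i a (K i a)); split; rewrite /inT /=.
- have [j <-] := latin_row_surj b a.
  by exists (triple b j (K b j)); split; rewrite /inT /=.
- have [i <-] := latin_col_surj b a.
  by exists (triple i b (K i b)); split; rewrite /inT /=.
Qed.

Lemma collinear_CK x y : x != y -> collinear (CK K) x y = (blk x != blk y).
Proof.
move=> neq_xy; apply/existsP/idP => [[X]|neq_blk].
  case/and3P=> /CKP [t _ ->] /imsetP [p _ Ex] /imsetP [p' _ Ey].
  by move: neq_xy; rewrite Ex Ey !blk_enc; apply: contra => /eqP ->.
have [t [Kt tx ty]] := latin_inT_extend (pos x) (pos y) neq_blk.
exists (tri t); rewrite tri_in_CK Kt.
by rewrite -(enc_blk_pos x) -(enc_blk_pos y) -tx -ty !enc_in_tri.
Qed.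

End LatinSquare.

Lemma CK_iso_blk (K1 K2 : 'I_m -> 'I_m -> 'I_m) (f : {perm 'I_(3 * m)}) :
  latin_square K1 -> latin_square K2 ->
  (forall X : {set 'I_(3 * m)}, (f @: X \in CK K2) = (X \in CK K1)) ->
  forall x y, (blk (f x) == blk (f y)) = (blk x == blk y).
Proof.
move=> latin1 latin2 isof x y.
have [<-|neq_xy] := eqVneq x y; first by rewrite !eqxx.
have neq_fxy : f x != f y by rewrite (inj_eq perm_inj).
apply: negb_inj; rewrite -(collinear_CK latin1 neq_xy).
by rewrite -(collinear_CK latin2 neq_fxy) (collinear_iso isof).
Qed.

Section Relabelling.
Variables (rho : {perm 'I_3}) (H : 'I_3 -> {perm 'I_m}).

Definition relabel_fun y := enc (rho (blk y)) (H (blk y) (pos y)).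

Lemma relabel_fun_inj : injective relabel_fun.
Proof.
move=> y y' /enc_inj [/perm_inj E]; rewrite E => /perm_inj E'.
by rewrite -(enc_blk_pos y) -(enc_blk_pos y') E E'.
Qed.

Definition relabel : {perm 'I_(3 * m)} := perm relabel_fun_inj.

Lemma relabel_enc p k : relabel (enc p k) = enc (rho p) (H p k).
Proof. by rewrite permE /relabel_fun blk_enc pos_enc. Qed.

(* [paratope t] moves coordinate [p] of the triple [t] to position [rho p] and
   relabels it by [H p]. *)
Definition paratope (t : 'I_3 -> 'I_m) (q : 'I_3) : 'I_m :=
  H ((rho^-1)%g q) (t ((rho^-1)%g q)).

Lemma paratope_surj u : exists t, paratope t =1 u.
Proof.
by exists (fun p => ((H p)^-1)%g (u (rho p))) => q; rewrite /paratope !permKV.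
Qed.

Lemma relabel_tri t : relabel @: tri t = tri (paratope t).
Proof.
apply/setP => y; apply/imsetP/imsetP => [[_ /imsetP [p _ ->] ->]|[q _ ->]].
  by exists (rho p); rewrite // relabel_enc /paratope permK.
exists (enc ((rho^-1)%g q) (t ((rho^-1)%g q))); first exact: imset_f.
by rewrite relabel_enc permKV.
Qed.

End Relabelling.

Definition paratopic (K1 K2 : 'I_m -> 'I_m -> 'I_m) : Prop :=
  exists rho H, forall t, inT K2 (paratope rho H t) = inT K1 t.

Lemma paratopic_CK_iso K1 K2 : paratopic K1 K2 -> set_system_iso (CK K1) (CK K2).
Proof.
case=> rho [H paraK]; exists (relabel rho H) => X.
apply/CKP/CKP => [[u K2u relX]|[t K1t ->]]; last first.
  by exists (paratope rho H t); rewrite ?paraK ?relabel_tri.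
have [t tu] := paratope_surj rho H u.
exists t; first by rewrite -paraK (inT_ext _ tu).
apply: (imset_inj (@perm_inj _ (relabel rho H))).
by rewrite relX relabel_tri (tri_ext tu).
Qed.

Lemma blk_preserving_relabel (f : {perm 'I_(3 * m)}) :
  (forall x y, (blk (f x) == blk (f y)) = (blk x == blk y)) ->
  exists rho H, f =1 relabel rho H.
Proof.
move=> blkf; pose k0 := Ordinal m_gt0.
pose rho_fun p := blk (f (enc p k0)).
have blk_f p k : blk (f (enc p k)) = rho_fun p by apply/eqP; rewrite blkf !blk_enc.
have rho_inj : injective rho_fun.
  by move=> p q /eqP; rewrite blkf !blk_enc => /eqP.
pose H_fun p k := pos (f (enc p k)).
have f_enc p k : f (enc p k) = enc (rho_fun p) (H_fun p k).
  by rewrite -(blk_f p k) enc_blk_pos.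
have H_inj p : injective (H_fun p).
  move=> k k' E; have : f (enc p k) = f (enc p k') by rewrite !f_enc E.
  by move/perm_inj/enc_inj => [].
exists (perm rho_inj), (fun p => perm (H_inj p)) => y.
by rewrite -(enc_blk_pos y) relabel_enc f_enc !permE.
Qed.

Lemma CK_iso_paratopic (K1 K2 : 'I_m -> 'I_m -> 'I_m) :
  latin_square K1 -> latin_square K2 ->
  set_system_iso (CK K1) (CK K2) -> paratopic K1 K2.
Proof.
move=> latin1 latin2 [f isof].
have [rho [H fE]] := blk_preserving_relabel (CK_iso_blk latin1 latin2 isof).
exists rho, H => t.
by rewrite -!tri_in_CK -isof -relabel_tri (eq_imset _ fE).
Qed.

Lemma main_class_isotopic_paratopic (K1 K2 : 'I_m -> 'I_m -> 'I_m) :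
  main_class_isotopic K1 K2 <-> paratopic K1 K2.
Proof.
split=> [[s [L [conjL [a [b [c isoL]]]]]] | [rho [H paraK]]].
  exists (s^-1)%g, (fun p => triple a b c ((s^-1)%g p)) => t.
  have -> : inT K1 t = inT L (fun q => t (s q)).
    by rewrite conjL; apply: inT_ext => i; rewrite permKV.
  by rewrite /inT /paratope /triple invgK !permK /= isoL (inj_eq perm_inj).
pose a := H ((rho^-1)%g o0); pose b := H ((rho^-1)%g o1).
pose c := H ((rho^-1)%g o2).
exists (rho^-1)%g, (fun x y => (c^-1)%g (K2 (a x) (b y))); split.
  move=> u; rewrite invgK -paraK /inT /paratope !permKV.
  by rewrite -(inj_eq (@perm_inj _ c)) permKV.
by exists a, b, c => i j; rewrite permKV.
Qed.

End Encoding.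

Lemma is_MK_triangles m (K : 'I_m -> 'I_m -> 'I_m) I :
  is_MK K I -> rank3_with_triangles (CK K) I.
Proof. by case. Qed.

Theorem mainTheorem4 (m : nat) (K1 K2 : 'I_m -> 'I_m -> 'I_m)
    (I1 I2 : {set 'I_(3 * m)} -> bool) :
  2 <= m -> latin_square K1 -> latin_square K2 ->
  is_MK K1 I1 -> is_MK K2 I2 ->
  (main_class_isotopic K1 K2 -> matroid_iso I1 I2) /\
  (~ main_class_isotopic K1 K2 -> ~ matroid_iso I1 I2).
Proof.
move=> m_ge2 latin1 latin2 /is_MK_triangles M1 /is_MK_triangles M2.
have m_gt0 : 0 < m by apply: leq_trans m_ge2.
have matroid_iso_paratopic : matroid_iso I1 I2 <-> paratopic K1 K2.
  apply: (iff_trans (matroid_iso_triangles M1 M2)).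
  by split; [exact: CK_iso_paratopic | exact: paratopic_CK_iso].
split=> [mci | not_mci iso].
  exact/matroid_iso_paratopic/main_class_isotopic_paratopic.
exact/not_mci/main_class_isotopic_paratopic/matroid_iso_paratopic.
Qed.
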